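(* Let $\lambda=(\lambda_1,\ldots,\lambda_n)\in\mathbb{C}^n$ have pairwise distinct entries. Then for every $l\in\{1,\ldots,n\}$, every $k\in\{0,\ldots,n-1\}$ and every $t$, $$\dot\nu_{k,\lambda}(t)=\lambda_l\,\nu_{k,\lambda}(t)-\lambda_l\,\nu_{k,\lambda_{\neg l}}(t)+\nu_{k-1,\lambda_{\neg l}}(t),$$ where $\lambda_{\neg l}=(\lambda_1,\ldots,\lambda_{l-1},\lambda_{l+1},\ldots,\lambda_n)$.
   Context: For a tuple $\mu=(\mu_1,\ldots,\mu_p)$ of distinct complex numbers, $V_\mu$ is the $p\times p$ Vandermonde matrix with $(i,j)$ entry $\mu_j^{i-1}$ and the Vandermonde basis functions are defined by $[\nu_{0,\mu}(t),\ldots,\nu_{p-1,\mu}(t)]=[e^{\mu_1 t},\ldots,e^{\mu_p t}]V_\mu^{-1}$; by convention $\nu_{k,\mu}(t)=0$ for $k<0$ and for $k\ge p$ (in particular all $\nu_{k,\mu}\equiv 0$ when $\mu$ is empty). *)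

From HB Require Import structures.
From mathcomp Require Import all_boot all_order all_algebra.
From mathcomp Require Import complex.
From mathcomp Require Import all_classical all_reals all_analysis.
Set Implicit Arguments. Unset Strict Implicit. Unset Printing Implicit Defensive.
Import Order.TTheory GRing.Theory Num.Theory.
Import numFieldNormedType.Exports.
Local Open Scope ring_scope.
Local Open Scope complex_scope.

Section VandermondeBasis.
Variable R : realType.
Local Notation C := R[i].

Definition cexp (z : C) : C :=
  (expR (complex.Re z) * cos (complex.Im z)) +i* (expR (complex.Re z) * sin (complex.Im z)).

(** the Vandermonde matrix V_mu, (i,j) entry mu_j^(i-1) (0-indexed: mu_j^i) *)
Definition Vmat (mu : seq C) : 'M[C]_(size mu) :=
  Vandermonde (size mu) (\row_(j < size mu) mu`_j).

Definition exprow (mu : seq C) (t : R) : 'rV[C]_(size mu) :=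
  \row_(j < size mu) cexp (mu`_j * t%:C).

(** Vandermonde basis functions nu_{k,mu}, with nu_{k,mu} = 0 for k < 0
    or k >= size mu *)
Definition nu (k : int) (mu : seq C) (t : R) : C :=
  match k with
  | Posz k' =>
      match insub k' : option 'I_(size mu) with
      | Some j => (exprow mu t *m invmx (Vmat mu)) 0 j
      | None => 0
      end
  | Negz _ => 0
  end.

Definition remove_at (l : nat) (lam : seq C) : seq C :=
  take l lam ++ drop l.+1 lam.

Definition has_cderiv (f : R -> C) (t : R) (d : C) : Prop :=
  is_derive t 1 (fun s => complex.Re (f s)) (complex.Re d) /\
  is_derive t 1 (fun s => complex.Im (f s)) (complex.Im d).

End VandermondeBasis.

(* Every entry x of mu satisfies sum_k nu_{k,mu}(t) x^k = e^{xt}, and since V_mu is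
   invertible the row (nu_{k,mu}(t))_k is the only row with this property; in the same
   way the row of derivatives is the only row whose polynomial takes the value x e^{xt}
   at every entry x of mu.  With P(x) = sum_k nu_{k,lam_{-l}}(t) x^k, the coefficient row
   of the claimed right-hand side has polynomial lam_l e^{xt} + (x - lam_l) P(x), because
   shifting the index k -> k-1 multiplies a polynomial by x.  At x = lam_l the second term
   vanishes, and at any other entry x of lam, which is an entry of lam_{-l}, P(x) = e^{xt};
   in both cases the value is x e^{xt}. *)

From HB Require Import structures.
From mathcomp Require Import all_boot all_order all_algebra.
From mathcomp Require Import complex.
From mathcomp Require Import all_classical all_reals all_analysis.
From mathcomp Require Import ring.
Set Implicit Arguments. Unset Strict Implicit. Unset Printing Implicit Defensive.
Import Order.TTheory GRing.Theory Num.Theory.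
Import numFieldNormedType.Exports.
Local Open Scope ring_scope.
Local Open Scope complex_scope.

Section ComplexDerivative.
Variable R : realType.
Local Notation C := R[i].

Lemma has_cderiv_sum n (F : 'I_n -> R -> C) (t : R) (d : 'I_n -> C) :
  (forall i, has_cderiv (F i) t (d i)) ->
  has_cderiv (fun s => \sum_(i < n) F i s) t (\sum_(i < n) d i).
Proof.
move=> dF; rewrite /has_cderiv !raddf_sum.
under eq_fun do rewrite raddf_sum.
under [X in _ /\ is_derive _ _ X _]eq_fun do rewrite raddf_sum.
rewrite -!(fct_sumE _ _ (fun i s => _ (F i s))).
by split; apply: is_derive_sum => i; case: (dF i).
Qed.

Lemma has_cderivMr (f : R -> C) (t : R) (d c : C) : has_cderiv f t d ->
  has_cderiv (fun s => f s * c) t (d * c).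
Proof.
case: c => a b [dRe dIm]; split.
- have -> : (fun s => complex.Re (f s * (a +i* b))) =
            a *: (fun s => complex.Re (f s)) - b *: (fun s => complex.Im (f s)).
    apply/funext => s; rewrite !fctE.
    by case: (f s) => x y /=; rewrite /GRing.scale /=; ring.
  by case: d dRe dIm => x y /= dRe dIm; rewrite [x * a]mulrC [y * b]mulrC; apply: is_deriveB.
- have -> : (fun s => complex.Im (f s * (a +i* b))) =
            b *: (fun s => complex.Re (f s)) + a *: (fun s => complex.Im (f s)).
    apply/funext => s; rewrite !fctE.
    by case: (f s) => x y /=; rewrite /GRing.scale /=; ring.
  by case: d dRe dIm => x y /= dRe dIm; rewrite [x * b]mulrC [y * a]mulrC; apply: is_deriveD.
Qed.

Lemma is_derive_scale (a t : R) : is_derive t 1 ( *%R a) a.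
Proof. by rewrite -[X in is_derive _ _ _ X]mulr1; apply: is_deriveZ. Qed.

Lemma has_cderiv_cexp (mu : C) (t : R) :
  has_cderiv (fun s => cexp (mu * s%:C)) t (mu * cexp (mu * t%:C)).
Proof.
case: mu => a b; rewrite /cexp.
have dexp := is_derive1_comp (is_derive_expR (a * t)) (is_derive_scale a t).
have dcos := is_derive1_comp (is_derive_cos (b * t)) (is_derive_scale b t).
have dsin := is_derive1_comp (is_derive_sin (b * t)) (is_derive_scale b t).
have muE s : (a +i* b) * s%:C = (a * s) +i* (b * s) by simpc.
under eq_fun do rewrite muE; rewrite muE /=.
split.
- have -> : (fun s => complex.Re (expR (a * s) * cos (b * s) +i* (expR (a * s) * sin (b * s))))
            = (expR \o *%R a) * (cos \o *%R b) by [].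
  by apply: is_derive_eq (is_deriveM dexp dcos) _; rewrite /GRing.scale /=; ring.
- have -> : (fun s => complex.Im (expR (a * s) * cos (b * s) +i* (expR (a * s) * sin (b * s))))
            = (expR \o *%R a) * (sin \o *%R b) by [].
  by apply: is_derive_eq (is_deriveM dexp dsin) _; rewrite /GRing.scale /=; ring.
Qed.
End ComplexDerivative.

Section VandermondeBasisTheory.
Variable R : realType.
Local Notation C := R[i].
Implicit Types (mu : seq C) (t : R) (x : C).

Definition exprow_deriv mu t : 'rV[C]_(size mu) :=
  \row_(j < size mu) (mu`_j * cexp (mu`_j * t%:C)).

Lemma Vmat_unit mu : uniq mu -> Vmat mu \in unitmx.
Proof.
move=> mu_uniq; rewrite unitmxE unitfE /Vmat det_Vandermonde.
apply/prodf_neq0 => i _; apply/prodf_neq0 => j lt_ij; rewrite !mxE subr_eq0.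
by rewrite nth_uniq // gtn_eqF.
Qed.

Lemma nu_ord mu (k : 'I_(size mu)) t :
  nu k mu t = (exprow mu t *m invmx (Vmat mu)) 0 k.
Proof. by rewrite /nu valK. Qed.

Lemma nu_ge mu (k : nat) t : (size mu <= k)%N -> nu k mu t = 0.
Proof. by move=> le_mu_k; rewrite /nu insubF // ltnNge le_mu_k. Qed.

Lemma sum_nu_exp mu t x : uniq mu -> x \in mu ->
  \sum_(k < size mu) nu k mu t * x ^+ k = cexp (x * t%:C).
Proof.
move=> mu_uniq x_mu; have x_idx : (index x mu < size mu)%N by rewrite index_mem.
transitivity (exprow mu t 0 (Ordinal x_idx)); last by rewrite mxE nth_index.
rewrite -(mulmxKV (Vmat_unit mu_uniq) (exprow mu t)) mxE.
by apply: eq_big => // k _; rewrite nu_ord !mxE nth_index.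
Qed.

Lemma sum_nu_widen mu t x n : (size mu <= n)%N ->
  \sum_(k < n) nu k mu t * x ^+ k = \sum_(k < size mu) nu k mu t * x ^+ k.
Proof.
move=> le_mu_n; rewrite (big_ord_widen n (fun k => nu k mu t * x ^+ k) le_mu_n).
rewrite [RHS]big_mkcond; apply: eq_big => [//|k _].
by case: ltnP => [//|le_mu_k]; rewrite nu_ge ?mul0r.
Qed.

Lemma sum_nu_pred mu t x n :
  \sum_(k < n.+1) nu (Posz k - 1) mu t * x ^+ k = x * \sum_(k < n) nu k mu t * x ^+ k.
Proof.
rewrite big_ord_recl mul0r add0r mulr_sumr; apply: eq_big => // k _.
by rewrite lift0 exprS -addn1 PoszD addrK mulrCA.
Qed.

Lemma has_cderiv_nu mu (k : 'I_(size mu)) t :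
  has_cderiv (nu k mu) t ((exprow_deriv mu t *m invmx (Vmat mu)) 0 k).
Proof.
have -> : nu k mu = fun s =>
    \sum_(j < size mu) cexp (mu`_j * s%:C) * invmx (Vmat mu) j k.
  by apply/funext => s; rewrite nu_ord mxE; apply: eq_big => // j _; rewrite mxE.
rewrite mxE; under eq_bigr do rewrite mxE.
by apply: has_cderiv_sum => j; apply/has_cderivMr/has_cderiv_cexp.
Qed.

Lemma remove_at_cons l (lam : seq C) : (l < size lam)%N ->
  lam = take l lam ++ lam`_l :: drop l.+1 lam.
Proof. by move=> lt_l_lam; rewrite -(drop_nth 0 lt_l_lam) cat_take_drop. Qed.

Lemma size_remove_at l (lam : seq C) : (l < size lam)%N ->
  size (remove_at l lam) = (size lam).-1.
Proof.
move=> lt_l_lam; rewrite {2}(remove_at_cons lt_l_lam) /remove_at !size_cat /=.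
by rewrite addnS.
Qed.

Lemma remove_at_uniq l (lam : seq C) : (l < size lam)%N -> uniq lam ->
  uniq (remove_at l lam).
Proof.
move=> lt_l_lam; rewrite {1}(remove_at_cons lt_l_lam); apply: subseq_uniq.
by rewrite cat_subseq // subseq_cons.
Qed.

Lemma mem_remove_at l (lam : seq C) x : (l < size lam)%N ->
  x \in lam -> x != lam`_l -> x \in remove_at l lam.
Proof.
move=> lt_l_lam; rewrite {1}(remove_at_cons lt_l_lam) mem_cat in_cons mem_cat.
by case/or3P=> [-> // | /eqP-> | ->]; rewrite ?eqxx ?orbT.
Qed.

Section RemoveOneExponent.
Variables (lam : seq C) (l : nat) (t : R).
Hypotheses (lam_uniq : uniq lam) (lt_l_lam : (l < size lam)%N).
Local Notation lam' := (remove_at l lam).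

Lemma sum_nu_remove_at x : x \in lam ->
  \sum_(k < size lam) (lam`_l * nu k lam t - lam`_l * nu k lam' t
                       + nu (Posz k - 1) lam' t) * x ^+ k = x * cexp (x * t%:C).
Proof.
move=> x_lam; have size_lam : size lam = (size lam').+1.
  by rewrite size_remove_at // prednK // (leq_ltn_trans _ lt_l_lam).
under eq_bigr do rewrite mulrDl mulrBl -!mulrA.
rewrite big_split sumrB /= -!mulr_sumr sum_nu_exp //.
rewrite size_lam sum_nu_pred sum_nu_widen //.
have [-> | x_neq] := eqVneq x lam`_l; first by rewrite subrK.
by rewrite sum_nu_exp ?remove_at_uniq ?mem_remove_at // subrr add0r.
Qed.

End RemoveOneExponent.

End VandermondeBasisTheory.

Theorem proposition5 (R : realType) (lam : seq R[i]) (hlam : uniq lam)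
    (l : nat) (hl : (l < size lam)%N) (k : nat) (hk : (k < size lam)%N) (t : R) :
  has_cderiv (nu (Posz k) lam) t
    (lam`_l * nu (Posz k) lam t
     - lam`_l * nu (Posz k) (remove_at l lam) t
     + nu (Posz k - 1) (remove_at l lam) t).
Proof.
pose w := \row_(j < size lam) (lam`_l * nu j lam t - lam`_l * nu j (remove_at l lam) t
                               + nu (Posz j - 1) (remove_at l lam) t).
have wV : w *m Vmat lam = exprow_deriv lam t.
  apply/rowP => j; rewrite !mxE; under eq_bigr do rewrite !mxE.
  exact/sum_nu_remove_at/mem_nth.
have -> : (lam`_l * nu k lam t - lam`_l * nu k (remove_at l lam) t
           + nu (Posz k - 1) (remove_at l lam) t) = w 0 (Ordinal hk) by rewrite mxE.
rewrite -(mulmxK (Vmat_unit hlam) w) wV.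
exact: (has_cderiv_nu (Ordinal hk)).
Qed.
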